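(* Let $(\mathfrak g,\mathcal F_\bullet\mathfrak g,R)$ be a filtered Rota–Baxter Lie algebra over a field of characteristic zero. Then, as vector spaces, $\widehat U(\mathfrak g)=\varprojlim U(\mathfrak g)/\mathcal F_nU(\mathfrak g)$ coincides with $\widehat U(\mathfrak g_R)=\varprojlim U(\mathfrak g_R)/\mathcal F_nU(\mathfrak g_R)$.
   Context: Filtered Rota–Baxter Lie algebra: a Lie algebra $\mathfrak g$ with subspaces $\mathfrak g=\mathcal F_1\mathfrak g\supset\mathcal F_2\mathfrak g\supset\cdots$, $[\mathcal F_n\mathfrak g,\mathcal F_m\mathfrak g]\subset\mathcal F_{n+m}\mathfrak g$, and linear $R$ with $[R(x),R(y)]=R([R(x),y]+[x,R(y)]+[x,y])$ and $R(\mathcal F_n\mathfrak g)\subset\mathcal F_n\mathfrak g$. $\mathcal R:U(\mathfrak g)\to U(\mathfrak g)$ is the linear map with $\mathcal R(1)=1$, $\mathcal R(x)=R(x)$, $\mathcal R(xh)=R(x)\mathcal R(h)-\mathcal R([R(x),h])$. $U(\mathfrak g_R)$, the universal enveloping algebra of the descendant Lie algebra $(\mathfrak g,[x,y]_R=[R(x),y]+[x,R(y)]+[x,y])$, is identified with the vector space $U(\mathfrak g)$ equipped with product $a\star b=a_{(1)}\mathcal R(a_{(2)})\,b\,S(\mathcal R(a_{(3)}))$. $\mathcal F_0U(\mathfrak g)=\mathcal F_0U(\mathfrak g_R)=U(\mathfrak g)$; for $n\ge1$, $\mathcal F_nU(\mathfrak g)$ is the span of $x_1\cdots x_k$ and $\mathcal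 F_nU(\mathfrak g_R)$ the span of $x_1\star\cdots\star x_k$, over $k\ge1$, $x_i\in\mathcal F_{n_i}\mathfrak g$, $\sum n_i\ge n$. *)

From HB Require Import structures.
From mathcomp Require Import all_boot all_order all_algebra.
Set Implicit Arguments. Unset Strict Implicit. Unset Printing Implicit Defensive.
Import GRing.Theory.
Local Open Scope ring_scope.

Section Defs.
Variable K : fieldType.

Definition subspace (V : lmodType K) (P : V -> Prop) : Prop :=
  P 0 /\ (forall (a : K) x y, P x -> P y -> P (a *: x + y)).

Definition is_lie_bracket (V : lmodType K) (br : V -> V -> V) : Prop :=
  [/\ forall (a : K) x y z, br (a *: x + y) z = a *: br x z + br y z,
      forall (a : K) x y z, br x (a *: y + z) = a *: br x y + br x z,
      forall x, br x x = 0 &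
      forall x y z, br x (br y z) + br y (br z x) + br z (br x y) = 0].

(* F_1 g = g ⊃ F_2 g ⊃ ..., subspaces, [F_n, F_m] ⊂ F_(n+m)  (indices n >= 1;
   the value F 0 is irrelevant) *)
Definition lie_filtration (V : lmodType K) (br : V -> V -> V)
  (F : nat -> V -> Prop) : Prop :=
  [/\ forall x, F 1%N x,
      forall n, (1 <= n)%N -> subspace (F n),
      forall n x, (1 <= n)%N -> F n.+1 x -> F n x &
      forall n m x y, (1 <= n)%N -> (1 <= m)%N -> F n x -> F m y ->
        F (n + m)%N (br x y)].

Definition filtered_rota_baxter (V : lmodType K) (br : V -> V -> V)
  (F : nat -> V -> Prop) (R : V -> V) : Prop :=
  [/\ forall (a : K) x y, R (a *: x + y) = a *: R x + R y,
      forall x y, br (R x) (R y) = R (br (R x) y + br x (R y) + br x y) &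
      forall n x, (1 <= n)%N -> F n x -> F n (R x)].

Definition lie_hom (V : lmodType K) (br : V -> V -> V) (B : algType K)
  (f : V -> B) : Prop :=
  (forall (a : K) x y, f (a *: x + y) = a *: f x + f y) /\
  (forall x y, f (br x y) = f x * f y - f y * f x).

Definition alg_hom (A B : algType K) (phi : A -> B) : Prop :=
  [/\ forall (a : K) x y, phi (a *: x + y) = a *: phi x + phi y,
      forall x y, phi (x * y) = phi x * phi y & phi 1 = 1].

Definition is_UEA (V : lmodType K) (br : V -> V -> V) (A : algType K)
  (iota : V -> A) : Prop :=
  lie_hom br iota /\
  forall (B : algType K) (f : V -> B), lie_hom br f ->
    exists phi : A -> B,
      [/\ alg_hom phi, forall x, phi (iota x) = f x &
          forall psi : A -> B, alg_hom psi -> (forall x, psi (iota x) = f x) ->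
            forall u, psi u = phi u].

Definition span (A : lmodType K) (S : A -> Prop) : A -> Prop :=
  fun u => exists (k : nat) (c : 'I_k -> K) (v : 'I_k -> A),
    (forall i, S (v i)) /\ u = \sum_(i < k) c i *: v i.

Definition FU (V : lmodType K) (F : nat -> V -> Prop) (A : algType K)
  (iota : V -> A) (n : nat) : A -> Prop :=
  if n == 0%N then (fun _ => True) else
  span (fun b => exists (k : nat) (x : 'I_k -> V) (d : 'I_k -> nat),
    [/\ (0 < k)%N, forall i, (1 <= d i)%N /\ F (d i) (x i),
        (n <= \sum_(i < k) d i)%N & b = \prod_(i < k) iota (x i)]).

(* For x in g and b in U(g), the product x * b in U(g_R), transported to U(g):
   x ⋆ b = x_(1) R(x_(2)) b S(R(x_(3))) = x b + R(x) b - b R(x)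
   (x is primitive, R(1) = 1, R(x) = R x, S(y) = -y for y in g). *)
Definition star_left (V : lmodType K) (R : V -> V) (A : algType K)
  (iota : V -> A) (x : V) (b : A) : A :=
  iota x * b + iota (R x) * b - b * iota (R x).

(* x_1 ⋆ x_2 ⋆ ... ⋆ x_k  (⋆ is associative with unit 1) *)
Definition star_word (V : lmodType K) (R : V -> V) (A : algType K)
  (iota : V -> A) (k : nat) (x : 'I_k -> V) : A :=
  foldr (fun i b => star_left R iota (x i) b) 1 (enum 'I_k).

(* F_n U(g_R), as a subspace of the underlying vector space U(g). *)
Definition FUR (V : lmodType K) (F : nat -> V -> Prop) (R : V -> V)
  (A : algType K) (iota : V -> A) (n : nat) : A -> Prop :=
  if n == 0%N then (fun _ => True) else
  span (fun b => exists (k : nat) (x : 'I_k -> V) (d : 'I_k -> nat),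
    [/\ (0 < k)%N, forall i, (1 <= d i)%N /\ F (d i) (x i),
        (n <= \sum_(i < k) d i)%N & b = star_word R iota x]).

(* Two decreasing filtrations P, Q of one vector space define the same
   completion lim V/P_n = lim V/Q_n (via the maps induced by the identity of V)
   iff they are mutually cofinal. *)
Definition same_completion (A : lmodType K) (P Q : nat -> A -> Prop) : Prop :=
  (forall n, exists m, forall u, P m u -> Q n u) /\
  (forall n, exists m, forall u, Q m u -> P n u).

End Defs.

(* In U(g) the transported product is x ⋆ b = x b + [R x, b].  Since R
   preserves the filtration and, for c in F_e g, the commutator [c, -] sends a
   product of k generators of total degree D to a combination of products of k
   generators of degree at least e + D, induction on the number of factors
   writes every monomial x_1 ... x_k of degree >= n as a combination of
   ⋆-monomials of degree >= n, and conversely.  So F_n U(g) = F_n U(g_R) for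
   every n, and the two completions agree.
   Each induction is stated for an arbitrary subspace P containing the
   generators of the target filtration, so that the inductive step can pass to
   the preimage of P under left multiplication by x, or under x ⋆ -. *)

From HB Require Import structures.
From mathcomp Require Import all_boot all_order all_algebra zify.
Set Implicit Arguments. Unset Strict Implicit. Unset Printing Implicit Defensive.
Import GRing.Theory.
Local Open Scope ring_scope.

Section Subspaces.
Variables (K : fieldType) (W : lmodType K).
Implicit Types (P S : W -> Prop) (x y : W).

Lemma subspace0 P : subspace P -> P 0.
Proof. by case. Qed.

Lemma subspaceD P x y : subspace P -> P x -> P y -> P (x + y).
Proof. by case=> _ hP Px Py; rewrite -[x]scale1r; apply: hP. Qed.

Lemma subspaceB P x y : subspace P -> P x -> P y -> P (x - y).
Proof. by case=> _ hP Px Py; rewrite addrC -scaleN1r; apply: hP. Qed.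

Lemma subspace_preimage (W' : lmodType K) (f : W' -> W) P :
  linear f -> subspace P -> subspace (fun u => P (f u)).
Proof.
move=> lin_f [P0 hP]; split=> [|a u v Pu Pv]; last by rewrite lin_f; apply: hP.
by have := lin_f (-1) 0 0; rewrite scaler0 addr0 scaleN1r addNr => ->.
Qed.

Lemma span_gen S x : S x -> span S x.
Proof.
by move=> Sx; exists 1%N, (fun=> 1), (fun=> x); rewrite big_ord1 scale1r.
Qed.

Lemma span_minimal S P : subspace P -> (forall x, S x -> P x) ->
  forall u, span S u -> P u.
Proof.
move=> sP SP u [k [c [v [Sv ->]]]]; elim: k c v Sv => [|k IH] c v Sv.
  by rewrite big_ord0; apply: subspace0.
by rewrite big_ord_recl; case: sP => _ hP; apply: hP; [apply: SP | apply: IH].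
Qed.

Lemma subspace_span S : subspace (span S).
Proof.
split=> [|a _ _ [k [c [v [Sv ->]]]] [l [c' [v' [Sv' ->]]]]].
  by exists 0%N, (fun=> 0), (fun=> 0); split=> [[]|]; rewrite ?big_ord0.
exists (k + l)%N,
  (fun i => match split i with inl j => a * c j | inr j => c' j end),
  (fun i => match split i with inl j => v j | inr j => v' j end).
split=> [i|]; first by case: (split i).
rewrite big_split_ord scaler_sumr; congr (_ + _); apply: eq_bigr => i _.
  by rewrite -[lshift l i]/(unsplit (inl i)) unsplitK scalerA.
by rewrite -[rshift k i]/(unsplit (inr i)) unsplitK.
Qed.

End Subspaces.

Lemma linear_mull (K : fieldType) (B : algType K) (a : B) : linear (fun u => a * u).
Proof. by move=> c u v; rewrite mulrDr scalerAr. Qed.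

Section Words.
Variables (K : fieldType) (V : lmodType K) (A : algType K).
Variables (F : nat -> V -> Prop) (R : V -> V) (iota : V -> A).
Implicit Types (p : nat * V) (s t : seq (nat * V)).

Definition graded p : Prop := (1 <= p.1)%N /\ F p.1 p.2.
Definition graded_word s : Prop := forall p, p \in s -> graded p.
Definition degree s : nat := \sum_(p <- s) p.1.
Definition monomial s : A := \prod_(p <- s) iota p.2.
Definition star_monomial s : A := foldr (fun p b => star_left R iota p.2 b) 1 s.

Lemma graded_word_nil : graded_word [::].
Proof. by []. Qed.

Lemma graded_word_cons p s : graded_word (p :: s) <-> graded p /\ graded_word s.
Proof.
split=> [gs | [gp gs] q]; last by rewrite inE => /predU1P [->|/gs].
by split=> [|q qs]; apply: gs; rewrite inE ?eqxx ?qs ?orbT.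
Qed.

Lemma graded_word_rcons p s : graded p -> graded_word s -> graded_word (rcons s p).
Proof. by move=> gp gs q; rewrite mem_rcons; move: q; apply/graded_word_cons. Qed.

Lemma degree_cons p s : degree (p :: s) = (p.1 + degree s)%N.
Proof. exact: big_cons. Qed.

Lemma degree_rcons p s : degree (rcons s p) = (degree s + p.1)%N.
Proof. exact: big_rcons. Qed.

Lemma monomial_cons p s : monomial (p :: s) = iota p.2 * monomial s.
Proof. exact: big_cons. Qed.

Lemma monomial_rcons p s : monomial (rcons s p) = monomial s * iota p.2.
Proof. exact: big_rcons. Qed.

Lemma linear_star_left x : linear (star_left R iota x).
Proof.
move=> a u v; rewrite /star_left !mulrDr !mulrDl -!scalerAr -!scalerAl.
by rewrite opprD scalerBr scalerDr [X in X + _ = _]addrACA [LHS]addrACA.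
Qed.

Definition word_of k (d : 'I_k -> nat) (x : 'I_k -> V) : seq (nat * V) :=
  [seq (d i, x i) | i <- enum 'I_k].

Lemma word_ofE s :
  s = word_of (fun i => (tnth (in_tuple s) i).1) (fun i => (tnth (in_tuple s) i).2).
Proof.
rewrite /word_of -[s in LHS](map_tnth_enum (in_tuple s)).
by apply: eq_map => i; rewrite -surjective_pairing.
Qed.

Lemma big_enum_ord (T : Type) (idx : T) (op : T -> T -> T) k (G : 'I_k -> T) :
  \big[op/idx]_(i <- enum 'I_k) G i = \big[op/idx]_(i < k) G i.
Proof. by rewrite enumT [index_enum _]unlock. Qed.

Section WordOf.
Variables (k : nat) (d : 'I_k -> nat) (x : 'I_k -> V).

Lemma degree_word_of : degree (word_of d x) = (\sum_(i < k) d i)%N.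
Proof. by rewrite /degree big_map big_enum_ord. Qed.

Lemma monomial_word_of : monomial (word_of d x) = \prod_(i < k) iota (x i).
Proof. by rewrite /monomial big_map big_enum_ord. Qed.

Lemma star_monomial_word_of : star_monomial (word_of d x) = star_word R iota x.
Proof. by rewrite /star_monomial foldr_map. Qed.

Lemma graded_word_of :
  (forall i, (1 <= d i)%N /\ F (d i) (x i)) -> graded_word (word_of d x).
Proof. by move=> gx _ /mapP [i _ ->]; apply: gx. Qed.

End WordOf.

Lemma word_of_graded_word s n : graded_word s -> (n.+1 <= degree s)%N ->
  exists k (x : 'I_k -> V) (d : 'I_k -> nat),
    [/\ (0 < k)%N, forall i, (1 <= d i)%N /\ F (d i) (x i),
        (n.+1 <= \sum_(i < k) d i)%N & s = word_of d x].
Proof.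
move=> gs ns; set t := in_tuple s; set x := fun i => (tnth t i).2.
exists (size s), x, (fun i => (tnth t i).1).
rewrite -(degree_word_of _ x) -word_ofE.
split=> // [|i]; last exact/gs/mem_tnth.
by case: s ns {gs t x} => //; rewrite /degree big_nil.
Qed.

Lemma FU_monomial n s : graded_word s -> (n <= degree s)%N ->
  FU F iota n (monomial s).
Proof.
rewrite /FU; case: n => [//|n] gs.
case/(word_of_graded_word gs)=> k [x [d [k0 gx dx ->]]].
by apply: span_gen; exists k, x, d; rewrite monomial_word_of.
Qed.

Lemma FUR_star_monomial n s : graded_word s -> (n <= degree s)%N ->
  FUR F R iota n (star_monomial s).
Proof.
rewrite /FUR; case: n => [//|n] gs.
case/(word_of_graded_word gs)=> k [x [d [k0 gx dx ->]]].
by apply: span_gen; exists k, x, d; rewrite star_monomial_word_of.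
Qed.

Lemma subspace_FU n : subspace (FU F iota n).
Proof. by rewrite /FU; case: n => [|n] /=; [split | apply: subspace_span]. Qed.

Lemma subspace_FUR n : subspace (FUR F R iota n).
Proof. by rewrite /FUR; case: n => [|n] /=; [split | apply: subspace_span]. Qed.

Lemma FU_minimal n P u : (0 < n)%N -> subspace P ->
  (forall s, graded_word s -> (n <= degree s)%N -> P (monomial s)) ->
  FU F iota n u -> P u.
Proof.
rewrite /FU; case: n => // n _ sP Pmon /=.
apply: span_minimal sP _ _ => _ [k [x [d [_ gx dx ->]]]].
rewrite -(monomial_word_of d); apply: Pmon; last by rewrite degree_word_of.
exact: graded_word_of.
Qed.

Lemma FUR_minimal n P u : (0 < n)%N -> subspace P ->
  (forall s, graded_word s -> (n <= degree s)%N -> P (star_monomial s)) ->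
  FUR F R iota n u -> P u.
Proof.
rewrite /FUR; case: n => // n _ sP Pstar /=.
apply: span_minimal sP _ _ => _ [k [x [d [_ gx dx ->]]]].
rewrite -(star_monomial_word_of d); apply: Pstar; last by rewrite degree_word_of.
exact: graded_word_of.
Qed.

End Words.

Section Filtrations.
Variables (K : fieldType) (V : lmodType K) (A : algType K).
Variables (br : V -> V -> V) (F : nat -> V -> Prop) (R : V -> V) (iota : V -> A).
Hypothesis F_br : forall n m x y, (1 <= n)%N -> (1 <= m)%N -> F n x -> F m y ->
  F (n + m)%N (br x y).
Hypothesis F_R : forall n x, (1 <= n)%N -> F n x -> F n (R x).
Hypothesis iota_br : forall x y, iota (br x y) = iota x * iota y - iota y * iota x.

Local Notation graded_word := (graded_word F).
Local Notation monomial := (monomial iota).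
Local Notation star_monomial := (star_monomial R iota).

Lemma commutator_monomial P e c s : subspace P -> (1 <= e)%N -> F e c ->
  graded_word s ->
  (forall t, graded_word t -> size t = size s -> (e + degree s <= degree t)%N ->
     P (monomial t)) ->
  P (iota c * monomial s - monomial s * iota c).
Proof.
move=> + e_gt0 Fc; elim: s P => [|[d x] s IH] P sP.
  by rewrite /monomial big_nil mul1r mulr1 subrr; move=> *; apply: subspace0.
case/graded_word_cons=> -[/= d_gt0 Fx] gs Pmon; rewrite monomial_cons /=.
have -> : iota c * (iota x * monomial s) - iota x * monomial s * iota c =
    iota (br c x) * monomial s + iota x * (iota c * monomial s - monomial s * iota c).
  by rewrite iota_br mulrBl mulrBr !mulrA addrA addrNK.
apply: (subspaceD sP).
  rewrite -[_ * _](monomial_cons iota ((e + d)%N, br c x)); apply: Pmon => /=.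
  - by apply/graded_word_cons; split=> //; split=> /=; [lia | apply: F_br].
  - by [].
  - by rewrite !degree_cons /=; lia.
apply: (IH (fun u => P (iota x * u))) => //.
  exact: subspace_preimage (linear_mull _) sP.
move=> t gt st dt; rewrite -[_ * _](monomial_cons iota (d, x)); apply: Pmon => /=.
- by apply/graded_word_cons.
- by rewrite st.
- by rewrite !degree_cons /=; lia.
Qed.

Lemma monomial_in_star_span P D s : subspace P -> graded_word s ->
  (D <= degree s)%N ->
  (forall t, graded_word t -> (D <= degree t)%N -> P (star_monomial t)) ->
  P (monomial s).
Proof.
have [n] := ubnP (size s); elim: n => // n IH in s P D *.
case: s => [_ _ _ D0 Pstar | [d x] s /= s_lt_n sP].
  have := Pstar [::] (graded_word_nil F) D0.
  by rewrite /star_monomial /monomial big_nil.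
case/graded_word_cons=> -[/= d_gt0 Fx] gs; rewrite degree_cons /= => Ds Pstar.
have -> : monomial ((d, x) :: s) =
    star_left R iota x (monomial s) - (iota (R x) * monomial s - monomial s * iota (R x)).
  by rewrite monomial_cons /star_left -[X in _ = X - _]addrA addrK.
apply: (subspaceB sP).
  apply: (IH s (fun u => P (star_left R iota x u)) (D - d)%N) => //; last 2 first.
  - by lia.
  - move=> t gt Dt; apply: (Pstar ((d, x) :: t)); first exact/graded_word_cons.
    by rewrite degree_cons /=; lia.
  exact: subspace_preimage (linear_star_left _ _ _) sP.
apply: commutator_monomial (F_R d_gt0 Fx) gs _ => // t gt st dt.
by apply: (IH t P D) => //; [rewrite st | lia].
Qed.

Lemma star_monomial_in_span P D s : subspace P -> graded_word s ->
  (D <= degree s)%N ->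
  (forall t, graded_word t -> (D <= degree t)%N -> P (monomial t)) ->
  P (star_monomial s).
Proof.
elim: s P D => [|[d x] s IH] P D sP.
  move=> _ D0 Pmon; have := Pmon [::] (graded_word_nil F) D0.
  by rewrite /monomial big_nil.
case/graded_word_cons=> -[/= d_gt0 Fx] gs; rewrite degree_cons /= => Ds Pmon.
apply: (IH (fun u => P (star_left R iota x u)) (D - d)%N) => //.
- exact: subspace_preimage (linear_star_left _ _ _) sP.
- by lia.
have gRx : graded F (d, R x) by split=> //; apply: F_R.
move=> t gt Dt; rewrite /star_left -(monomial_cons iota (d, x)).
rewrite -(monomial_cons iota (d, R x)) -(monomial_rcons iota (d, R x)).
apply: (subspaceB sP); first apply: (subspaceD sP).
- by apply: Pmon; [exact/graded_word_cons | rewrite degree_cons /=; lia].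
- by apply: Pmon; [exact/graded_word_cons | rewrite degree_cons /=; lia].
- by apply: Pmon; [exact: graded_word_rcons | rewrite degree_rcons /=; lia].
Qed.

End Filtrations.

Theorem corollary4p11 (K : fieldType) (V : lmodType K) (br : V -> V -> V)
  (F : nat -> V -> Prop) (R : V -> V) (A : algType K) (iota : V -> A) :
  [pchar K] =i pred0 ->
  is_lie_bracket br ->
  lie_filtration br F ->
  filtered_rota_baxter br F R ->
  is_UEA br iota ->
  same_completion (FU F iota) (FUR F R iota).
Proof.
move=> _ _ [_ _ _ F_br] [_ _ F_R] [[_ iota_br] _].
split=> n; exists n => u; (case: n => [|n]; first by rewrite /FU /FUR).
- apply: FU_minimal => // [|s gs ds]; first exact: subspace_FUR.
  apply: (monomial_in_star_span F_br F_R iota_br (subspace_FUR _ _ _ _) gs ds).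
  exact: FUR_star_monomial.
- apply: FUR_minimal => // [|s gs ds]; first exact: subspace_FU.
  apply: (star_monomial_in_span F_R (subspace_FU _ _ _) gs ds).
  exact: FU_monomial.
Qed.
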